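(* Consider a run of Algorithm 3 (described in the context). Fix a hypercube $I_j$ and a run on $I_j$ of length $\zeta$ (number of queries), and suppose that a total of $\xi$ signals were corrupted during this run. Then the pricing rounds of this run incur total pricing loss $L\cdot O(\zeta\eta_0+\xi\tau_0)$, with an absolute constant.
   Context: Problem. Fix $L>0$, $d\ge 1$, horizon $T\ge 2$. An adversary fixes an unknown $f:[0,1]^d\to[0,L]$ with $|f(x)-f(y)|\le L\|x-y\|_\infty$. In each round $t=1,\dots,T$: the adversary chooses $x_t\in[0,1]^d$; the learner observes $x_t$ and posts $q_t$; the adversary observes $q_t$ and sends $\sigma_t\in\{0,1\}$. With $\sigma(u)=1$ if $u>0$, $0$ if $u\le 0$: uncorrupted rounds have $\sigma_t=\sigma(q_t-f(x_t))$, corrupted rounds $\sigma_t=1-\sigma(q_t-f(x_t))$; the adversary chooses adaptively which rounds to corrupt, at most $C$ in total, $C$ unknown to the learner. The pricing loss of round $t$ is $f(x_t)-q_t\cdot\mathbb{1}[q_t\le f(x_t)]$. $\mathtt{len}$ denotes length of an interval and side length of a hypercube. $\mathtt{MidpointQuery}(I,Y)$, $Y=[a,b]$: guess $q=(a+b)/2$; if $\sigma_t=1$ return $Y\cap[0,q+L\,\mathtt{len}(I)]$, if $\sigma_t=0$ return $Y\cap[q-L\,\mathtt{len}(I),\infty)$. Algorithm 3 (parameters $\eta_0=T^{-1/(d+1)}$ and a schedule $\tau_0\ge1$). Uniformly partition $[0,1]^d$ into hypercubes of side length $\Theta(\eta_0)$; each hypercube $I_j$ has range $Y_j$ (initially $[0,L]$)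 and counter $c_j$ (initially $0$). In round $t$, with $I_j\ni x_t$: if $\mathtt{len}(Y_j)<10L\eta_0$ ($I_j$ pricing-ready), set $c_j:=c_j+1$; if $c_j>\tau_0$ guess $\max(Y_j)$ (checking round) and set $c_j:=0$, else guess $\min(Y_j)$ (pricing round). The learner becomes ''surprised'' when a checking round receives $\sigma_t=0$ or a pricing round receives $\sigma_t=1$; it then sets $Y_j:=[0,L]$, $c_j:=0$. If $I_j$ is not pricing-ready, it performs a searching round $Y_j:=\mathtt{MidpointQuery}(I_j,Y_j)$. Runs. For a fixed hypercube $I_j$, a run is the set of queries (rounds whose context lies in $I_j$) from the start of the algorithm or from the most recent reset of $Y_j$ up to the round in which the learner becomes surprised on $I_j$ (or until the algorithm terminates). Its length is the number of such queries. *)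

From Stdlib Require Import Reals Lra Lia List.
Open Scope R_scope.

(* sigma(u) = 1 if u > 0, 0 if u <= 0; signals are booleans (true = 1). *)
Definition sgn (u : R) : bool := if Rlt_dec 0 u then true else false.

(* Points of R^d are functions nat -> R, only coordinates i < d matter. *)
Definition supnorm (d : nat) (v : nat -> R) : R :=
  fold_right Rmax 0 (map (fun i => Rabs (v i)) (seq 0 d)).

Definition in_unit_cube (d : nat) (x : nat -> R) : Prop :=
  forall i, (i < d)%nat -> 0 <= x i <= 1.

Definition in_grid_cube (d : nat) (s : R) (k : nat -> nat) (x : nat -> R) : Prop :=
  forall i, (i < d)%nat -> INR (k i) * s <= x i <= (INR (k i) + 1) * s.

Definition valid_valuation (d : nat) (L : R) (f : (nat -> R) -> R) : Prop :=
  (forall x, in_unit_cube d x -> 0 <= f x <= L) /\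
  (forall x y, in_unit_cube d x -> in_unit_cube d y ->
     Rabs (f x - f y) <= L * supnorm d (fun i => x i - y i)).

Definition eta0 (d T : nat) : R := Rpower (INR T) (- / INR (S d)).

(* State of one hypercube: range Y = [lo, hi] and counter c. *)
Record hstate := HState { lo : R; hi : R; cnt : nat }.

Definition init_state (L : R) : hstate := HState 0 L 0.

Inductive rkind := Searching | Pricing | Checking.

(* Parameters: Lipschitz constant L, eta0, schedule tau0, side length s of I_j. *)
Section Alg.
Variables (L eta tau0 s : R).

Definition ready (st : hstate) : bool :=
  if Rlt_dec (hi st - lo st) (10 * L * eta) then true else false.

Definition kind_of (st : hstate) : rkind :=
  if ready st then
    (if Rlt_dec tau0 (INR (S (cnt st))) then Checking else Pricing)
  else Searching.

Definition guess (st : hstate) : R :=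
  match kind_of st with
  | Checking => hi st
  | Pricing => lo st
  | Searching => (lo st + hi st) / 2
  end.

Definition surprised (st : hstate) (sig : bool) : bool :=
  match kind_of st with
  | Checking => negb sig
  | Pricing => sig
  | Searching => false
  end.

Definition midpoint_query (a b : R) (sig : bool) : R * R :=
  let q := (a + b) / 2 in
  if sig then (Rmax a 0, Rmin b (q + L * s))
  else (Rmax a (q - L * s), b).

Definition step (st : hstate) (sig : bool) : hstate :=
  if surprised st sig then init_state L else
  match kind_of st with
  | Checking => HState (lo st) (hi st) 0
  | Pricing => HState (lo st) (hi st) (S (cnt st))
  | Searching =>
      let '(a', b') := midpoint_query (lo st) (hi st) sig in HState a' b' (cnt st)
  end.

(* state before the k-th query (0-indexed) of a run started from [0,L], c = 0 *)
Fixpoint state_at (sig : nat -> bool) (k : nat) : hstate :=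
  match k with
  | O => init_state L
  | S k' => step (state_at sig k') (sig k')
  end.

End Alg.

Definition pricing_loss (fx q : R) : R :=
  if Rle_dec q fx then fx - q else fx.

Fixpoint sumR (n : nat) (g : nat -> R) : R :=
  match n with O => 0 | S n' => sumR n' g + g n' end.

Fixpoint countN (n : nat) (p : nat -> bool) : nat :=
  match n with O => O | S n' => (countN n' p + if p n' then 1 else 0)%nat end.

(* While no signal has been corrupted, the range [lo, hi] of the cube contains
   every value f(x_t) of the run (these differ by at most L len(I_j) <= L eta0),
   so a pricing round loses less than the ready width 10 L eta0.  In general a
   pricing round loses more than 12 L eta0 only if its signal is corrupted or if
   the range is stale, i.e. lies entirely below all values.  The loss (at most L)
   of each stale pricing round is banked in the potential L c_j, and the next
   checking round must then receive a corrupted signal 1, which pays for the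
   whole bank since c_j <= tau0.  The last query of the run may surprise the
   learner and costs at most L. *)

From Stdlib Require Import Reals List Lra Lia.
Open Scope R_scope.

Lemma sumR_le_const n g c :
  (forall k, (k < n)%nat -> g k <= c) -> sumR n g <= INR n * c.
Proof.
  induction n as [|n IH]; intros Hg; [simpl; lra|].
  simpl sumR. rewrite S_INR.
  assert (sumR n g <= INR n * c) by (apply IH; intros k Hk; apply Hg; lia).
  assert (g n <= c) by (apply Hg; lia).
  lra.
Qed.

Lemma sumR_telescope n g h p :
  (forall k, (k < n)%nat -> g k + p k <= p (S k) + h k) ->
  sumR n g + p O <= p n + sumR n h.
Proof.
  induction n as [|n IH]; intros Hstep; simpl sumR; [lra|].
  assert (sumR n g + p O <= p n + sumR n h) by (apply IH; intros k Hk; apply Hstep; lia).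
  assert (g n + p n <= p (S n) + h n) by (apply Hstep; lia).
  lra.
Qed.

Lemma sumR_const_indicator n a c (b : nat -> bool) :
  sumR n (fun k => a + if b k then c else 0) = INR n * a + INR (countN n b) * c.
Proof.
  induction n as [|n IH]; simpl sumR; simpl countN; [simpl; ring|].
  rewrite IH, S_INR, plus_INR. destruct (b n); simpl; ring.
Qed.

Lemma countN_eq0 n (b : nat -> bool) :
  countN n b = O -> forall k, (k < n)%nat -> b k = false.
Proof.
  induction n as [|n IH]; simpl; intros H k Hk; [lia|].
  destruct (b n) eqn:Hbn; [lia|].
  destruct (Nat.eq_dec k n) as [->|]; [exact Hbn|].
  apply IH; lia.
Qed.

Lemma supnorm_le d w c :
  0 <= c -> (forall i, (i < d)%nat -> Rabs (w i) <= c) -> supnorm d w <= c.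
Proof.
  intros Hc Hw. unfold supnorm.
  assert (Hall : forall a, In a (map (fun i => Rabs (w i)) (seq 0 d)) -> a <= c).
  { intros a Ha. apply in_map_iff in Ha. destruct Ha as [i [<- Hi]].
    apply in_seq in Hi. apply Hw. lia. }
  induction (map (fun i => Rabs (w i)) (seq 0 d)) as [|a l IH]; simpl; [exact Hc|].
  apply Rmax_lub; [apply Hall; left; reflexivity|].
  apply IH. intros b Hb. apply Hall. right. exact Hb.
Qed.

Lemma in_grid_cube_supnorm_le d s k x y :
  0 <= s -> in_grid_cube d s k x -> in_grid_cube d s k y ->
  supnorm d (fun i => x i - y i) <= s.
Proof.
  intros Hs Hx Hy. apply supnorm_le; [exact Hs|]. intros i Hi.
  specialize (Hx i Hi). specialize (Hy i Hi).
  apply Rabs_le. lra.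
Qed.

Lemma valid_valuation_grid_cube_le d L f s k x y :
  0 <= L -> 0 <= s -> valid_valuation d L f ->
  in_unit_cube d x -> in_grid_cube d s k x ->
  in_unit_cube d y -> in_grid_cube d s k y ->
  f x <= f y + L * s.
Proof.
  intros HL Hs [_ Hlip] Hux Hgx Huy Hgy.
  pose proof (Hlip x y Hux Huy) as Hxy.
  pose proof (in_grid_cube_supnorm_le d s k x y Hs Hgx Hgy).
  pose proof (Rle_abs (f x - f y)).
  assert (L * supnorm d (fun i => x i - y i) <= L * s) by (apply Rmult_le_compat_l; lra).
  lra.
Qed.

Section Run.

Variables (L E tau0 s : R).
Hypotheses (HL : 0 <= L) (Hs : 0 <= s) (HsE : s <= E) (Htau0 : 1 <= tau0).

Definition round_loss (st : hstate) (y : R) : R :=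
  match kind_of L E tau0 st with
  | Pricing => pricing_loss y (guess L E tau0 st)
  | _ => 0
  end.

Definition corrupted (st : hstate) (sg : bool) (y : R) : bool :=
  negb (Bool.eqb sg (sgn (guess L E tau0 st - y))).

(* The banked loss of the current stale phase; [c] is a reference value within
   [L * s] of every value of the run, so [hi + L * s < c] means staleness. *)
Definition stale_credit (c : R) (st : hstate) : R :=
  if ready L E st then
    if Rlt_dec (hi st + L * s) c then L * INR (cnt st) else 0
  else 0.

Lemma kind_of_Pricing st :
  kind_of L E tau0 st = Pricing -> ready L E st = true /\ INR (S (cnt st)) <= tau0.
Proof.
  unfold kind_of. destruct (ready L E st); [|discriminate].
  destruct Rlt_dec; [discriminate|]. split; [reflexivity|lra].
Qed.

Lemma kind_of_Checking st : kind_of L E tau0 st = Checking -> ready L E st = true.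
Proof. unfold kind_of. destruct (ready L E st); [reflexivity|discriminate]. Qed.

Lemma kind_of_Searching st : kind_of L E tau0 st = Searching -> ready L E st = false.
Proof.
  unfold kind_of. destruct (ready L E st); [|reflexivity].
  destruct Rlt_dec; discriminate.
Qed.

Lemma ready_width st : ready L E st = true -> hi st - lo st < 10 * L * E.
Proof. unfold ready. destruct Rlt_dec; [trivial|discriminate]. Qed.

Lemma pricing_loss_le_value y q : 0 <= q -> pricing_loss y q <= y.
Proof. intros Hq. unfold pricing_loss. destruct Rle_dec; lra. Qed.

Lemma sgn_true u : 0 < u -> sgn u = true.
Proof. unfold sgn. destruct Rlt_dec; [reflexivity|lra]. Qed.

Lemma sgn_false u : u <= 0 -> sgn u = false.
Proof. unfold sgn. destruct Rlt_dec; [lra|reflexivity]. Qed.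

Lemma midpoint_query_contains a b w y :
  a <= y <= b -> 0 <= y -> y <= w + L * s -> w <= y + L * s ->
  let ab := midpoint_query L s a b (sgn ((a + b) / 2 - w)) in
  fst ab <= y <= snd ab.
Proof.
  intros Hy Hy0 Hyw Hwy. unfold midpoint_query, sgn.
  destruct Rlt_dec; simpl; unfold Rmax, Rmin; repeat destruct Rle_dec; lra.
Qed.

Lemma step_lo_nonneg st sg : 0 <= lo st -> 0 <= lo (step L E tau0 s st sg).
Proof.
  intros Hlo. unfold step. destruct surprised; simpl; [lra|].
  destruct kind_of; simpl; [|lra|lra].
  unfold midpoint_query. destruct sg; simpl; unfold Rmax; repeat destruct Rle_dec; lra.
Qed.

Lemma step_cnt_le st sg :
  INR (cnt st) <= tau0 -> INR (cnt (step L E tau0 s st sg)) <= tau0.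
Proof.
  intros Hc. unfold step. destruct surprised; simpl; [lra|].
  destruct kind_of eqn:Hk; simpl.
  - destruct midpoint_query; exact Hc.
  - apply kind_of_Pricing, Hk.
  - lra.
Qed.

Lemma step_contains st sg w y :
  lo st <= y <= hi st -> 0 <= y <= L -> y <= w + L * s -> w <= y + L * s ->
  sg = sgn (guess L E tau0 st - w) ->
  lo (step L E tau0 s st sg) <= y <= hi (step L E tau0 s st sg).
Proof.
  intros Hy Hy0 Hyw Hwy ->. unfold step. destruct surprised; simpl; [lra|].
  destruct kind_of eqn:Hk; simpl; [|exact Hy|exact Hy].
  unfold guess. rewrite Hk.
  pose proof (midpoint_query_contains (lo st) (hi st) w y Hy ltac:(lra) Hyw Hwy) as Hmq.
  destruct midpoint_query. exact Hmq.
Qed.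

Lemma stale_credit_nonneg c st : 0 <= stale_credit c st.
Proof.
  unfold stale_credit. pose proof (pos_INR (cnt st)).
  destruct ready; [destruct Rlt_dec|]; [apply Rmult_le_pos| |]; lra.
Qed.

Lemma stale_credit_le c st : INR (cnt st) <= tau0 -> stale_credit c st <= L * tau0.
Proof.
  intros Hc. unfold stale_credit. pose proof (Rmult_le_compat_l L _ _ HL Hc).
  assert (0 <= L * tau0) by (apply Rmult_le_pos; lra).
  destruct ready; [destruct Rlt_dec|]; lra.
Qed.

Lemma stale_credit_step c st sg y :
  0 <= lo st -> INR (cnt st) <= tau0 -> 0 <= y <= L ->
  y <= c + L * s -> c <= y + L * s ->
  surprised L E tau0 st sg = false ->
  round_loss st y + stale_credit c st <=
  stale_credit c (step L E tau0 s st sg) + (10 * L * E + 2 * L * s) +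
  (if corrupted st sg y then L * (tau0 + 1) else 0).
Proof.
  intros Hlo Hcnt Hy Hyc Hcy Hsur.
  assert (Hcharge : 0 <= (if corrupted st sg y then L * (tau0 + 1) else 0)).
  { destruct corrupted; [apply Rmult_le_pos|]; lra. }
  assert (Hwidth : 0 <= 10 * L * E + 2 * L * s).
  { assert (0 <= L * E) by (apply Rmult_le_pos; lra).
    assert (0 <= L * s) by (apply Rmult_le_pos; lra). lra. }
  unfold round_loss, step. rewrite Hsur. unfold surprised in Hsur.
  destruct (kind_of L E tau0 st) eqn:Hk.
  - destruct midpoint_query as [a' b'].
    pose proof (stale_credit_nonneg c (HState a' b' (cnt st))).
    unfold stale_credit at 1. rewrite (kind_of_Searching st Hk). lra.
  - subst sg. destruct (kind_of_Pricing st Hk) as [Hready _].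
    pose proof (ready_width st Hready).
    unfold corrupted, guess, stale_credit in *. rewrite Hk in *.
    pose proof (pricing_loss_le_value y (lo st) Hlo).
    change (ready L E (HState (lo st) (hi st) (S (cnt st)))) with (ready L E st).
    rewrite Hready. simpl hi. simpl cnt. rewrite S_INR.
    destruct Rlt_dec as [Hstale|Hfresh]; [lra|].
    destruct (Rle_dec (lo st) y) as [Hle|Hgt].
    + unfold pricing_loss. destruct Rle_dec; lra.
    + rewrite (sgn_true (lo st - y)) by lra. simpl.
      unfold pricing_loss. destruct Rle_dec; [lra|].
      assert (L <= L * (tau0 + 1)) by nra. lra.
  - destruct sg; [|discriminate]. pose proof (kind_of_Checking st Hk) as Hready.
    unfold corrupted, guess, stale_credit in *. rewrite Hk in *.
    change (ready L E (HState (lo st) (hi st) 0)) with (ready L E st).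
    rewrite Hready. simpl hi. simpl cnt. simpl INR.
    destruct Rlt_dec as [Hstale|Hfresh]; [|lra].
    rewrite (sgn_false (hi st - y)) by lra. simpl.
    assert (L * INR (cnt st) <= L * (tau0 + 1)) by (apply Rmult_le_compat_l; lra).
    lra.
Qed.

Lemma round_loss_le_value st y : 0 <= lo st -> 0 <= y -> round_loss st y <= y.
Proof.
  intros Hlo Hy. unfold round_loss.
  destruct kind_of eqn:Hk; [lra| |lra].
  unfold guess. rewrite Hk. apply pricing_loss_le_value, Hlo.
Qed.

Variables (sig : nat -> bool) (v : nat -> R) (zeta : nat).
Hypothesis v_range : forall t, (t < zeta)%nat -> 0 <= v t <= L.
Hypothesis v_close : forall t k, (t < zeta)%nat -> (k < zeta)%nat -> v t <= v k + L * s.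
Hypothesis no_surprise : forall t, (S t < zeta)%nat ->
  surprised L E tau0 (state_at L E tau0 s sig t) (sig t) = false.

Local Notation st k := (state_at L E tau0 s sig k).
Local Notation loss_at k := (round_loss (st k) (v k)).
Local Notation corrupted_at k := (corrupted (st k) (sig k) (v k)).

Lemma state_at_lo_nonneg k : 0 <= lo (st k).
Proof. induction k as [|k IH]; simpl; [lra|apply step_lo_nonneg, IH]. Qed.

Lemma state_at_cnt_le k : INR (cnt (st k)) <= tau0.
Proof. induction k as [|k IH]; simpl; [lra|apply step_cnt_le, IH]. Qed.

Lemma state_at_contains k :
  (k <= zeta)%nat -> (forall j, (j < k)%nat -> corrupted_at j = false) ->
  forall t, (t < zeta)%nat -> lo (st k) <= v t <= hi (st k).
Proof.
  induction k as [|k IH]; intros Hk Hclean t Ht; simpl; [apply v_range, Ht|].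
  assert (Hkz : (k < zeta)%nat) by lia.
  apply step_contains with (w := v k).
  - apply IH; [lia| |exact Ht]. intros j Hj. apply Hclean. lia.
  - apply v_range, Ht.
  - apply v_close; assumption.
  - apply v_close; assumption.
  - apply Bool.eqb_prop, Bool.negb_false_iff, (Hclean k). lia.
Qed.

Lemma run_loss_le_uncorrupted :
  countN zeta (fun k => corrupted_at k) = O ->
  sumR zeta (fun k => loss_at k) <= INR zeta * (10 * L * E).
Proof.
  intros Hclean. apply sumR_le_const. intros k Hk.
  pose proof (state_at_contains k ltac:(lia)
                (fun j Hj => countN_eq0 _ _ Hclean j ltac:(lia)) k Hk) as Hin.
  assert (0 <= L * E) by (apply Rmult_le_pos; lra).
  unfold round_loss. destruct kind_of eqn:Hkind; [lra| |lra].
  pose proof (ready_width _ (proj1 (kind_of_Pricing _ Hkind))).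
  unfold guess, pricing_loss. rewrite Hkind. destruct Rle_dec; lra.
Qed.

Lemma run_loss_le_prefix n :
  (n < zeta)%nat ->
  sumR n (fun k => loss_at k) <=
  L * tau0 + INR n * (10 * L * E + 2 * L * s) +
  INR (countN n (fun k => corrupted_at k)) * (L * (tau0 + 1)).
Proof.
  intros Hn.
  assert (Hstep : forall k, (k < n)%nat ->
    loss_at k + stale_credit (v O) (st k) <=
    stale_credit (v O) (st (S k)) +
    ((10 * L * E + 2 * L * s) + if corrupted_at k then L * (tau0 + 1) else 0)).
  { intros k Hk. rewrite <- Rplus_assoc.
    apply stale_credit_step;
      [apply state_at_lo_nonneg|apply state_at_cnt_le|apply v_range|
       apply v_close|apply v_close|apply no_surprise]; lia. }
  pose proof (sumR_telescope _ _ _ _ Hstep) as Htel.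
  rewrite sumR_const_indicator in Htel.
  pose proof (stale_credit_nonneg (v O) (st O)).
  pose proof (stale_credit_le (v O) (st n) (state_at_cnt_le n)).
  lra.
Qed.

Lemma run_pricing_loss_le :
  sumR zeta (fun k => loss_at k) <=
  12 * L * (INR zeta * E + INR (countN zeta (fun k => corrupted_at k)) * tau0).
Proof.
  assert (HLE : L * s <= L * E) by (apply Rmult_le_compat_l; lra).
  assert (0 <= L * E) by (apply Rmult_le_pos; lra).
  pose proof (pos_INR zeta).
  destruct (Nat.eq_dec (countN zeta (fun k => corrupted_at k)) O) as [Hclean|Hdirty].
  - pose proof (run_loss_le_uncorrupted Hclean). rewrite Hclean. simpl INR.
    assert (0 <= INR zeta * (L * E)) by (apply Rmult_le_pos; lra).
    lra.
  - assert (Hz : zeta = S (pred zeta)) by (destruct zeta; [simpl in Hdirty|]; lia).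
    set (n := pred zeta) in Hz. rewrite Hz in Hdirty |- *. simpl sumR.
    pose proof (run_loss_le_prefix n ltac:(lia)) as Hprefix.
    assert (Hlast : loss_at n <= L).
    { pose proof (v_range n ltac:(lia)).
      pose proof (round_loss_le_value (st n) (v n) (state_at_lo_nonneg n) ltac:(lra)).
      lra. }
    set (C := countN n (fun k => corrupted_at k)) in Hprefix.
    set (X := countN (S n) (fun k => corrupted_at k)) in Hdirty |- *.
    assert (HCX : INR C <= INR X) by (apply le_INR; unfold C, X; simpl; lia).
    assert (HX1 : 1 <= INR X) by (apply (le_INR 1); lia).
    assert (INR n * (L * s) <= INR n * (L * E)) by (apply Rmult_le_compat_l, HLE; apply pos_INR).
    assert (INR C * (L * (tau0 + 1)) <= INR X * (L * (tau0 + 1))) by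
      (apply Rmult_le_compat_r; [apply Rmult_le_pos|]; lra).
    assert (INR X * (L * (tau0 + 1)) <= INR X * (L * (2 * tau0))) by
      (apply Rmult_le_compat_l; [|apply Rmult_le_compat_l]; lra).
    assert (L * tau0 <= INR X * (L * tau0)) by
      (rewrite <- (Rmult_1_l (L * tau0)) at 1; apply Rmult_le_compat_r; [apply Rmult_le_pos|]; lra).
    assert (L <= INR X * (L * tau0)) by nra.
    rewrite S_INR. lra.
Qed.

End Run.

Theorem lemma29 :
  exists K : R,
  forall (d T : nat) (L tau0 : R) (f : (nat -> R) -> R)
         (m : nat) (kidx : nat -> nat)
         (x : nat -> nat -> R) (sig : nat -> bool) (zeta : nat),
    (1 <= d)%nat -> (2 <= T)%nat -> 0 < L -> 1 <= tau0 ->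
    valid_valuation d L f ->
    (* I_j is a cell of the uniform grid of [0,1]^d with side 1/m = Theta(eta0) *)
    (0 < m)%nat -> (forall i, (i < d)%nat -> (kidx i < m)%nat) ->
    eta0 d T / 2 <= / INR m <= eta0 d T ->
    (* the run: zeta queries whose contexts lie in I_j *)
    (zeta <= T)%nat ->
    (forall t, (t < zeta)%nat -> in_unit_cube d (x t) /\ in_grid_cube d (/ INR m) kidx (x t)) ->
    (* no surprise before the last query of the run *)
    (forall t, (S t < zeta)%nat ->
       surprised L (eta0 d T) tau0
         (state_at L (eta0 d T) tau0 (/ INR m) sig t) (sig t) = false) ->
    let st t := state_at L (eta0 d T) tau0 (/ INR m) sig t in
    let q t := guess L (eta0 d T) tau0 (st t) in
    let xi := countN zeta (fun t =>
                negb (Bool.eqb (sig t) (sgn (q t - f (x t))))) in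
    sumR zeta (fun t =>
       match kind_of L (eta0 d T) tau0 (st t) with
       | Pricing => pricing_loss (f (x t)) (q t)
       | _ => 0
       end)
    <= K * L * (INR zeta * eta0 d T + INR xi * tau0).
Proof.
  exists 12.
  intros d T L tau0 f m kidx x sig zeta _ _ HL Htau0 Hf Hm _ [_ Hside] _ Hx Hns st q xi.
  assert (Hs : 0 <= / INR m) by (apply Rlt_le, Rinv_0_lt_compat, lt_0_INR; lia).
  apply (run_pricing_loss_le L (eta0 d T) tau0 (/ INR m) ltac:(lra) Hs Hside Htau0
           sig (fun t => f (x t)) zeta); [| |exact Hns].
  - intros t Ht. apply (proj1 Hf), (Hx t Ht).
  - intros t k Ht Hk.
    destruct (Hx t Ht) as [Hut Hgt]. destruct (Hx k Hk) as [Huk Hgk].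
    apply (valid_valuation_grid_cube_le d L f (/ INR m) kidx); auto; lra.
Qed.
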